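(* For every infinite cardinal $\lambda$, there is no Hausdorff $d$-feebly compact topological semigroup $S$ containing a dense subsemigroup isomorphic to the semigroup of $\lambda\times\lambda$-matrix units $B_\lambda$.
   Context: For a non-zero cardinal $\lambda$, $B_\lambda=(\lambda\times\lambda)\cup\{0\}$ with multiplication $(a,b)\cdot(c,d)=(a,d)$ if $b=c$, $(a,b)\cdot(c,d)=0$ if $b\neq c$, and $(a,b)\cdot0=0\cdot(a,b)=0\cdot0=0$. A topological semigroup is a topological space with a jointly continuous associative operation. A space is $d$-feebly compact if every discrete family of its open subsets is finite. *)

From HB Require Import structures.
From mathcomp Require Import all_boot all_order.
From mathcomp Require Import all_classical topology.
Set Implicit Arguments. Unset Strict Implicit. Unset Printing Implicit Defensive.
Local Open Scope classical_set_scope.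

(* The semigroup of L x L matrix units B_L = (L x L) u {0};
   [None] is the zero element, [Some (a,b)] is the pair (a,b). *)
Definition Bl (L : Type) := option (L * L).

Definition Bmul (L : Type) (x y : Bl L) : Bl L :=
  match x, y with
  | Some (a, b), Some (c, d) => if asbool (b = c) then Some (a, d) else None
  | _, _ => None
  end.

Definition discrete_family (S : topologicalType) (F : set (set S)) : Prop :=
  forall x : S, exists U : set S, nbhs x U /\
    forall A B : set S, F A -> F B -> U `&` A !=set0 -> U `&` B !=set0 -> A = B.

Definition d_feebly_compact (S : topologicalType) : Prop :=
  forall F : set (set S), (forall A, F A -> open A) -> discrete_family F ->
    finite_set F.

Definition topological_semigroup (S : topologicalType) (mul : S -> S -> S) : Prop :=
  associative mul /\ continuous (fun p : S * S => mul p.1 p.2).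

From HB Require Import structures.
From mathcomp Require Import all_boot all_order.
From mathcomp Require Import all_classical topology.

Set Implicit Arguments.
Unset Strict Implicit.
Unset Printing Implicit Defensive.

Local Open Scope classical_set_scope.

(* Write e_ab for the image of the matrix unit (a,b) and 0 for that of the zero.  Each e_ab
   is isolated: the open set of all v with e_aa v e_bb <> 0 meets the dense copy of B_L only
   in e_ab, so in a T1 space it is {e_ab}.  The singletons of infinitely many e_ab thus form
   an infinite family of open sets, which cannot be discrete: it has a limit point.  A limit
   point z of idempotents e_bb satisfies z z = z and z z = 0, so the diagonal tends to 0
   along the cofinite filter; then a limit point z of a row e_ab satisfies z 0 = 0 and also
   z 0 = z (as e_ab e_bb = e_ab), so rows and likewise columns tend to 0.  Finally
   e_ab e_ba = e_aa forces 0 0 = e_aa, contradicting 0 0 = 0. *)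

Local Notation cofinite := (@frechet_filter _ : set_system _).

Lemma d_feebly_compact_limit_point (S : topologicalType) (A : set S) :
  d_feebly_compact S -> (forall x, A x -> open [set x]) -> infinite_set A ->
  limit_point A !=set0.
Proof.
move=> dfcS A_open A_infinite.
have /existsNP[z z_not_discrete] : ~ discrete_family [set [set x] | x in A].
  move=> discrete; apply: A_infinite.
  have : finite_set [set [set x] | x in A].
    by apply: dfcS discrete => _ [x Ax <-]; exact: A_open.
  by rewrite (eq_finite_set (inj_card_eq _)) // => x y _ _ /seteqP[/(_ x erefl)].
exists z => U zU; apply: contrapT => noU; apply: z_not_discrete.
exists U; split => // _ _ [x Ax <-] [y Ay <-] [u [Uu ux]] [v [Uv vy]].
rewrite ux in Uu; rewrite vy in Uv.
apply: contrapT => xy; apply: noU.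
have [xz|xz] := eqVneq x z.
- by exists y; split => //; apply/eqP => yz; apply: xy; rewrite xz yz.
- by exists x.
Qed.

Lemma limit_point_image_avoid (S : topologicalType) (I : Type) (h : I -> S)
    (R : set I) (z : S) :
  accessible_space S -> limit_point (h @` R) z ->
  forall (U : set S) (D : set I), nbhs z U -> finite_set D ->
  exists i, [/\ R i, ~ D i & U (h i)].
Proof.
move=> T1 zR U D zU D_finite.
have C_closed : closed (h @` D `\ z).
  exact: (accessible_finite_set_closed.1 T1) (finite_setD _ (finite_image _ D_finite)).
have zC : nbhs z (U `&` ~` (h @` D `\ z)).
  apply: filterI zU (open_nbhs_nbhs _); split; first exact: closed_openC.
  by move=> [_ /(_ erefl)].
have [y [yz [i Ri hiy] [Uy yC]]] := zR _ zC.
exists i; rewrite hiy; split => // Di; apply: yC; split; first by exists i.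
exact/eqP.
Qed.

Lemma cvg_frechet_of_limit_points (S : topologicalType) (I : Type) (h : I -> S) (z0 : S) :
  d_feebly_compact S -> injective h -> (forall i, open [set h i]) ->
  (forall R z, infinite_set R -> limit_point (h @` R) z -> z = z0) ->
  h @ cofinite --> z0.
Proof.
move=> dfcS h_inj h_open z0_unique M z0M; apply: contrapT => R_infinite.
have hR_infinite : infinite_set (h @` ~` (h @^-1` M)).
  by rewrite (eq_finite_set (inj_card_eq _)) // => i j _ _ /h_inj.
have [z zR] : limit_point (h @` ~` (h @^-1` M)) !=set0.
  by apply: d_feebly_compact_limit_point => // _ [i _ <-].
have zM : nbhs z M by rewrite (z0_unique _ _ R_infinite zR).
by have [_ [_ [i nMhi <-] Mhi]] := zR M zM.
Qed.

Lemma open_dense_subset1 (S : topologicalType) (D W : set S) (x : S) :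
  accessible_space S -> closure D = [set: S] -> open W ->
  W `&` D `<=` [set x] -> W `<=` [set x].
Proof.
move=> T1 D_dense W_open WD y Wy; apply: contrapT => yx.
have : closure D y by rewrite D_dense.
case/(_ (W `&` ~` [set x])).
  apply: open_nbhs_nbhs; split; last by split.
  apply: openI => //; apply: closed_openC; exact: accessible_closed_set1.
by move=> w [Dw [Ww wx]]; apply: wx; apply: WD.
Qed.

Lemma Bmul_match (L : Type) (a b c : L) : Bmul (Some (a, b)) (Some (b, c)) = Some (a, c).
Proof. by rewrite /= asboolT. Qed.

Lemma Bmul_mismatch (L : Type) (a b c d : L) :
  b <> c -> Bmul (Some (a, b)) (Some (c, d)) = None.
Proof. by move=> bc; rewrite /= asboolF. Qed.

Lemma Bmul_sandwich (L : Type) (a b : L) (w : Bl L) :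
  Bmul (Bmul (Some (a, a)) w) (Some (b, b)) <> None -> w = Some (a, b).
Proof.
case: w => [[c d]|] //=.
by case: asboolP => [<-|] //=; case: asboolP => [->|].
Qed.

Section TopologicalSemigroup.
Context {S : topologicalType} {mul : S -> S -> S}.
Hypothesis mul_cont : continuous (fun p : S * S => mul p.1 p.2).

Lemma mul_eq_approx (x y w : S) :
  hausdorff_space S ->
  (forall U V W, nbhs x U -> nbhs y V -> nbhs w W ->
     exists u v, [/\ U u, V v & W (mul u v)]) ->
  mul x y = w.
Proof.
move=> S_hausdorff approx; apply: S_hausdorff => A W xyA wW.
have [[U V] /= [xU yV] UV] := @mul_cont (x, y) A xyA.
have [u [v [Uu Vv Wuv]]] := approx U V W xU yV wW.
by exists (mul u v); split => //; exact: (UV (u, v)).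
Qed.

Lemma continuous_mul_sandwich (c d : S) : continuous (fun v => mul (mul c v) d).
Proof.
have mul_cont_at a b : mul z.1 z.2 @[z --> (a, b)] --> mul a b := @mul_cont (a, b).
move=> v.
have mul_c : mul c x @[x --> v] --> mul c v.
  by apply: (continuous2_cvg _ (mul_cont_at c v)); [exact: cvg_cst|exact: cvg_id].
by apply: (continuous2_cvg _ (mul_cont_at (mul c v) d) mul_c); exact: cvg_cst.
Qed.

Section DenseMatrixUnits.
Context {L : Type} {f : Bl L -> S}.
Hypotheses (S_hausdorff : hausdorff_space S) (f_inj : injective f)
  (f_mul : {morph f : x y / Bmul x y >-> mul x y}) (f_dense : closure (range f) = [set: S])
  (S_dfc : d_feebly_compact S).

Local Notation e p := (f (Some p)).

Let T1 : accessible_space S := hausdorff_accessible S_hausdorff.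

Lemma open_matrix_unit (p : L * L) : open [set e p].
Proof.
case: p => a b.
pose W := (fun v => mul (mul (e (a, a)) v) (e (b, b))) @^-1` ~` [set f None].
have W_open : open W.
  have /continuousP := @continuous_mul_sandwich (e (a, a)) (e (b, b)); apply.
  by apply: closed_openC; exact: accessible_closed_set1.
have W_ab : W (e (a, b)) by rewrite /W /= -!f_mul !Bmul_match => /f_inj.
have W_range : W `&` range f `<=` [set e (a, b)].
  move=> y [Wy [w _ wy]]; move: Wy; rewrite -wy /W /= -!f_mul => Ww.
  suff -> : w = Some (a, b) by [].
  by apply: Bmul_sandwich => /(congr1 f).
suff -> : [set e (a, b)] = W by [].
apply/seteqP; split; first by move=> _ ->.
exact: open_dense_subset1 T1 f_dense W_open W_range.
Qed.

Lemma diagonal_cvg0 : (fun b => e (b, b)) @ cofinite --> f None.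
Proof.
apply: cvg_frechet_of_limit_points => // [b b' /f_inj[]//|b|R z _ zR].
  exact: open_matrix_unit.
have near_z := limit_point_image_avoid T1 zR.
have zz_z : mul z z = z.
  apply: mul_eq_approx => // U V W zU zV zW.
  have [b [_ _ [[Ub Vb] Wb]]] := near_z _ _ (filterI (filterI zU zV) zW) (finite_set0 L).
  by exists (e (b, b)), (e (b, b)); rewrite -f_mul Bmul_match.
have zz_0 : mul z z = f None.
  apply: mul_eq_approx => // U V W zU zV zW.
  have [b [_ _ Ub]] := near_z _ _ zU (finite_set0 L).
  have [b' [_ b'b Vb']] := near_z _ _ zV (finite_set1 b).
  exists (e (b, b)), (e (b', b')); rewrite -f_mul Bmul_mismatch //.
  + by split => //; exact: nbhs_singleton.
  + by move=> bb'; apply: b'b.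
by rewrite -zz_z.
Qed.

Lemma row_cvg0 (a : L) : (fun b => e (a, b)) @ cofinite --> f None.
Proof.
apply: cvg_frechet_of_limit_points => // [b b' /f_inj[]//|b|R z _ zR].
  exact: open_matrix_unit.
have near_z := limit_point_image_avoid T1 zR.
have mulz0_0 : mul z (f None) = f None.
  apply: mul_eq_approx => // U V W zU zV zW.
  have [b [_ _ Ub]] := near_z _ _ zU (finite_set0 L).
  exists (e (a, b)), (f None); rewrite -f_mul.
  by split => //; exact: nbhs_singleton.
have mulz0_z : mul z (f None) = z.
  apply: mul_eq_approx => // U V W zU zV zW.
  have [b [_ Vb [Ub Wb]]] := near_z _ _ (filterI zU zW) (diagonal_cvg0 zV).
  exists (e (a, b)), (e (b, b)); rewrite -f_mul Bmul_match.
  by split => //; apply: contrapT.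
by rewrite -mulz0_z.
Qed.

Lemma column_cvg0 (a : L) : (fun b => e (b, a)) @ cofinite --> f None.
Proof.
apply: cvg_frechet_of_limit_points => // [b b' /f_inj[]//|b|R z _ zR].
  exact: open_matrix_unit.
have near_z := limit_point_image_avoid T1 zR.
have mul0z_0 : mul (f None) z = f None.
  apply: mul_eq_approx => // U V W zU zV zW.
  have [b [_ _ Vb]] := near_z _ _ zV (finite_set0 L).
  exists (f None), (e (b, a)); rewrite -f_mul.
  by split => //; exact: nbhs_singleton.
have mul0z_z : mul (f None) z = z.
  apply: mul_eq_approx => // U V W zU zV zW.
  have [b [_ Ub [Vb Wb]]] := near_z _ _ (filterI zV zW) (diagonal_cvg0 zU).
  exists (e (b, b)), (e (b, a)); rewrite -f_mul Bmul_match.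
  by split => //; apply: contrapT.
by rewrite -mul0z_z.
Qed.

End DenseMatrixUnits.
End TopologicalSemigroup.

Theorem corollary12 (L : Type) (L_infinite : infinite_set [set: L])
    (S : topologicalType) (mul : S -> S -> S) :
  topological_semigroup mul -> hausdorff_space S -> d_feebly_compact S ->
  ~ exists f : Bl L -> S,
      injective f /\
      (forall x y : Bl L, f (Bmul x y) = mul (f x) (f y)) /\
      closure (range f) = [set: S].
Proof.
move=> [_ mul_cont] S_hausdorff S_dfc [f [f_inj [f_mul f_dense]]].
have [a _] := infinite_setN0 L_infinite.
have row_a := row_cvg0 mul_cont S_hausdorff f_inj f_mul f_dense S_dfc a.
have column_a := column_cvg0 mul_cont S_hausdorff f_inj f_mul f_dense S_dfc a.
have zero_sq : mul (f None) (f None) = f (Some (a, a)).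
  apply: (mul_eq_approx mul_cont) => // U V W U0 V0 Waa.
  pose D := [set b | ~ U (f (Some (a, b)))] `|` [set b | ~ V (f (Some (b, a)))].
  have D_finite : finite_set D.
    by rewrite finite_setU; split; [exact: row_a U0|exact: column_a V0].
  have [b /not_orP[/contrapT Uab /contrapT Vba]] : ~` D !=set0.
    apply: infinite_setN0; apply: (cofinite_set_infinite L_infinite).
    by rewrite setCK.
  exists (f (Some (a, b))), (f (Some (b, a))); rewrite -f_mul Bmul_match.
  by split => //; exact: nbhs_singleton.
by have := f_inj _ _ (etrans (f_mul None None) zero_sq).
Qed.
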